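(* Let $L>0$, $\bar\alpha\in(0,1)$ and $\rho$ satisfy $-\tfrac{1}{2L}<\rho$ and $-\rho L\ge\frac{1-\bar\alpha}{2}$. Then for every $n\ge2$ there exists an $L$-Lipschitz operator $F:\mathbb R^n\to\mathbb R^n$ with a zero $z^\star$ such that $\langle Fz,z-z^\star\rangle\ge\rho\|Fz\|^2$ for all $z\in\mathbb R^n$, and an initial point $z^0$, such that the sequence generated by $$\bar z^k=z^k-\tfrac1L Fz^k,\qquad z^{k+1}=z^k-\tfrac{\bar\alpha}{L}F\bar z^k$$ does not converge. *)

From mathcomp Require Import all_boot all_order all_algebra.
From mathcomp Require Import reals.
Set Implicit Arguments. Unset Strict Implicit. Unset Printing Implicit Defensive.
Import Order.TTheory GRing.Theory Num.Theory.
Local Open Scope ring_scope.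

Definition edot (R : realType) (n : nat) (u v : 'rV[R]_n) : R :=
  \sum_(i < n) u 0 i * v 0 i.

Definition enorm (R : realType) (n : nat) (u : 'rV[R]_n) : R :=
  Num.sqrt (edot u u).

Definition lipschitz (R : realType) (n : nat) (L : R) (F : 'rV[R]_n -> 'rV[R]_n) :=
  forall x y, enorm (F x - F y) <= L * enorm (x - y).

Definition converges (R : realType) (n : nat) (z : nat -> 'rV[R]_n) :=
  exists l : 'rV[R]_n, forall eps : R, 0 < eps ->
    exists N : nat, forall k : nat, (N <= k)%N -> enorm (z k - l) < eps.

Fixpoint eg_seq (R : realType) (n : nat) (F : 'rV[R]_n -> 'rV[R]_n)
  (L alpha : R) (z0 : 'rV[R]_n) (k : nat) : 'rV[R]_n :=
  match k with
  | 0 => z0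
  | k'.+1 =>
      let zk := eg_seq F L alpha z0 k' in
      let zbar := zk - L^-1 *: F zk in
      zk - (alpha / L) *: F zbar
  end.

From mathcomp Require Import all_boot all_order all_algebra.
From mathcomp Require Import reals ring lra.
Set Implicit Arguments. Unset Strict Implicit.
Import Order.TTheory GRing.Theory Num.Theory.
Local Open Scope ring_scope.

(* Fix two distinct coordinates i0, i1 and let F = L * Rot, where Rot rotates
   the (i0, i1)-plane by the angle whose cosine is c = -(1 - alpha)/2 and
   kills every other coordinate.  Then F is L-Lipschitz, F 0 = 0, and
   <F z, z> = L c |z|_plane^2 >= rho |F z|^2 because rho L <= c.

   Identifying the plane with C, F is multiplication by L*lam with
   lam = c + i s, |lam| = 1, and one step of the iteration multiplies the
   planar part of z^k by g = 1 - alpha lam + alpha lam^2.  The choice of c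
   makes |g| = 1 while g != 1, so the planar part of the orbit of
   z^0 = e_{i0} stays on the unit circle and moves by the fixed positive
   distance |g - 1| at every step; such a sequence cannot be Cauchy. *)

(* Real and imaginary parts of g = 1 - alpha lam + alpha lam^2 for the unit
   complex number lam = c + i s: the planar multiplier of one step. *)
Definition eg_mult_re (R : realType) (alpha c s : R) : R :=
  1 - alpha * c + alpha * (c ^+ 2 - s ^+ 2).

Definition eg_mult_im (R : realType) (alpha c s : R) : R :=
  - alpha * s + 2 * alpha * c * s.

Section TwoCoordinates.
Variables (R : realType) (n : nat) (i0 i1 : 'I_n).
Hypothesis i01 : i0 != i1.

Lemma sum_supported2 (f : 'I_n -> R) :
  (forall j, j != i0 -> j != i1 -> f j = 0) -> \sum_j f j = f i0 + f i1.
Proof.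
move=> hf; rewrite (bigD1 i0) //= (bigD1 i1) /=; last by rewrite eq_sym.
by rewrite big1 ?addr0 // => j /andP[h0 h1]; exact: hf.
Qed.

Lemma edot_self_ge0 (w : 'rV[R]_n) : 0 <= edot w w.
Proof. by apply: sumr_ge0 => j _; rewrite -expr2 sqr_ge0. Qed.

Lemma edot_self_ge_plane (w : 'rV[R]_n) :
  w 0 i0 ^+ 2 + w 0 i1 ^+ 2 <= edot w w.
Proof.
rewrite /edot (bigD1 i0) //= (bigD1 i1) /=; last by rewrite eq_sym.
by rewrite !expr2 addrA lerDl; apply: sumr_ge0 => j _; rewrite -expr2 sqr_ge0.
Qed.

Lemma plane_dist_lt (x l : 'rV[R]_n) (eps : R) :
  enorm (x - l) < eps ->
  (x 0 i0 - l 0 i0) ^+ 2 + (x 0 i1 - l 0 i1) ^+ 2 < eps ^+ 2.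
Proof.
move=> hlt; have := edot_self_ge_plane (x - l); rewrite !mxE.
rewrite -(sqr_sqrtr (edot_self_ge0 (x - l))) -/(enorm (x - l)) => hle.
apply: (le_lt_trans hle); rewrite ltr_pXn2r // ?nnegrE ?sqrtr_ge0 //.
exact: le_trans (sqrtr_ge0 _) (ltW hlt).
Qed.

Lemma not_converges_const_steps (z : nat -> 'rV[R]_n) (d : R) :
  0 < d ->
  (forall k, (z k.+1 0 i0 - z k 0 i0) ^+ 2 + (z k.+1 0 i1 - z k 0 i1) ^+ 2 = d) ->
  ~ converges z.
Proof.
move=> d0 hstep [l hl].
have d8 : 0 <= d / 8 by rewrite divr_ge0 // ltW.
have eps0 : 0 < Num.sqrt (d / 8) by rewrite sqrtr_gt0 divr_gt0.
have [N hN] := hl _ eps0.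
have := plane_dist_lt (hN N (leqnn N)); have := plane_dist_lt (hN N.+1 (leqnSn N)).
have := hstep N; rewrite sqr_sqrtr //.
have parallelogram (u v w : R) : (u - v) ^+ 2 <= 2 * (u - w) ^+ 2 + 2 * (v - w) ^+ 2.
  rewrite -subr_ge0 (_ : _ - _ = (u + v - 2 * w) ^+ 2) ?sqr_ge0 //; ring.
have := parallelogram (z N.+1 0 i0) (z N 0 i0) (l 0 i0).
have := parallelogram (z N.+1 0 i1) (z N 0 i1) (l 0 i1).
lra.
Qed.

Lemma rotation_orbit_steps (z : nat -> 'rV[R]_n) (gr gi : R) :
  gr ^+ 2 + gi ^+ 2 = 1 ->
  (forall k, z k.+1 0 i0 = gr * z k 0 i0 - gi * z k 0 i1 /\
             z k.+1 0 i1 = gi * z k 0 i0 + gr * z k 0 i1) ->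
  forall k, (z k.+1 0 i0 - z k 0 i0) ^+ 2 + (z k.+1 0 i1 - z k 0 i1) ^+ 2
            = ((gr - 1) ^+ 2 + gi ^+ 2) * (z 0 0 i0 ^+ 2 + z 0 0 i1 ^+ 2).
Proof.
move=> hg hrec.
have radius k : z k 0 i0 ^+ 2 + z k 0 i1 ^+ 2 = z 0 0 i0 ^+ 2 + z 0 0 i1 ^+ 2.
  elim: k => [//|k <-]; have [-> ->] := hrec k.
  transitivity ((gr ^+ 2 + gi ^+ 2) * (z k 0 i0 ^+ 2 + z k 0 i1 ^+ 2)); first ring.
  by rewrite hg mul1r.
move=> k; rewrite -(radius k); have [-> ->] := hrec k; ring.
Qed.

Definition plane_rot (L c s : R) (z : 'rV[R]_n) : 'rV[R]_n :=
  \row_j (if j == i0 then L * (c * z 0 i0 - s * z 0 i1)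
          else if j == i1 then L * (s * z 0 i0 + c * z 0 i1) else 0).

Variables (L c s : R).

Lemma plane_rot_i0 z : plane_rot L c s z 0 i0 = L * (c * z 0 i0 - s * z 0 i1).
Proof. by rewrite mxE eqxx. Qed.

Lemma plane_rot_i1 z : plane_rot L c s z 0 i1 = L * (s * z 0 i0 + c * z 0 i1).
Proof. by rewrite mxE eq_sym (negbTE i01) eqxx. Qed.

Lemma plane_rotB x y :
  plane_rot L c s x - plane_rot L c s y = plane_rot L c s (x - y).
Proof.
apply/rowP => j; rewrite !mxE.
by case: ifP => _; [ring | case: ifP => _; [ring | rewrite subr0]].
Qed.

Lemma plane_rot0 : plane_rot L c s 0 = 0.
Proof.
by apply/rowP => j; rewrite !mxE !mulr0 subr0 addr0 mulr0; case: ifP => //; case: ifP.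
Qed.

Lemma edot_plane_rot z v :
  edot (plane_rot L c s z) v =
  L * (c * z 0 i0 - s * z 0 i1) * v 0 i0 + L * (s * z 0 i0 + c * z 0 i1) * v 0 i1.
Proof.
rewrite /edot sum_supported2 ?plane_rot_i0 ?plane_rot_i1 // => j h0 h1.
by rewrite mxE (negbTE h0) (negbTE h1) mul0r.
Qed.

Hypothesis unit_cs : c ^+ 2 + s ^+ 2 = 1.

Lemma edot_plane_rot_self z :
  edot (plane_rot L c s z) (plane_rot L c s z) = L ^+ 2 * (z 0 i0 ^+ 2 + z 0 i1 ^+ 2).
Proof.
rewrite edot_plane_rot plane_rot_i0 plane_rot_i1.
transitivity (L ^+ 2 * ((c ^+ 2 + s ^+ 2) * (z 0 i0 ^+ 2 + z 0 i1 ^+ 2))); first ring.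
by rewrite unit_cs mul1r.
Qed.

Lemma plane_rot_lipschitz : 0 <= L -> lipschitz L (plane_rot L c s).
Proof.
move=> L0 x y; rewrite plane_rotB /enorm edot_plane_rot_self.
rewrite sqrtrM ?sqr_ge0 // sqrtr_sqr ger0_norm //.
by rewrite ler_wpM2l // ler_sqrt ?edot_self_ge0 // edot_self_ge_plane.
Qed.

(* <F z, z> = L c |z|_plane^2 = (c / L) |F z|^2, hence the weak
   co-monotonicity rho |F z|^2 <= <F z, z> as soon as rho L <= c. *)
Lemma plane_rot_comonotone (rho : R) :
  0 < L -> rho * L <= c ->
  forall z, rho * enorm (plane_rot L c s z) ^+ 2 <= edot (plane_rot L c s z) z.
Proof.
move=> L0 hrho z; rewrite /enorm sqr_sqrtr ?edot_self_ge0 // edot_plane_rot_self.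
rewrite edot_plane_rot.
have Q0 : 0 <= z 0 i0 ^+ 2 + z 0 i1 ^+ 2 by rewrite addr_ge0 ?sqr_ge0.
set Q := _ + _ in Q0 *.
have -> : L * (c * z 0 i0 - s * z 0 i1) * z 0 i0 + L * (s * z 0 i0 + c * z 0 i1) * z 0 i1
    = L * c * Q by rewrite /Q; ring.
have : 0 <= (c - rho * L) * L * Q by rewrite !mulr_ge0 ?subr_ge0 // ltW.
nra.
Qed.

Lemma eg_seq_plane_rot (alpha : R) (z0 : 'rV[R]_n) : L != 0 ->
  forall k,
  eg_seq (plane_rot L c s) L alpha z0 k.+1 0 i0 =
    eg_mult_re alpha c s * eg_seq (plane_rot L c s) L alpha z0 k 0 i0
    - eg_mult_im alpha c s * eg_seq (plane_rot L c s) L alpha z0 k 0 i1 /\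
  eg_seq (plane_rot L c s) L alpha z0 k.+1 0 i1 =
    eg_mult_im alpha c s * eg_seq (plane_rot L c s) L alpha z0 k 0 i0
    + eg_mult_re alpha c s * eg_seq (plane_rot L c s) L alpha z0 k 0 i1.
Proof.
move=> L0 k; rewrite /= !mxE !eqxx eq_sym (negbTE i01) /eg_mult_re /eg_mult_im.
by split; field.
Qed.

End TwoCoordinates.

Lemma eg_multiplier_unit (R : realType) (alpha c s : R) :
  c = - (1 - alpha) / 2 -> c ^+ 2 + s ^+ 2 = 1 ->
  eg_mult_re alpha c s ^+ 2 + eg_mult_im alpha c s ^+ 2 = 1.
Proof.
move=> hc hcs; have hs : s ^+ 2 = 1 - c ^+ 2 by rewrite -hcs; ring.
rewrite /eg_mult_re /eg_mult_im.
have -> : (- alpha * s + 2 * alpha * c * s) ^+ 2 = alpha ^+ 2 * (2 * c - 1) ^+ 2 * s ^+ 2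
  by ring.
by rewrite hs hc; field.
Qed.

Lemma eg_multiplier_im_ne0 (R : realType) (alpha c s : R) :
  c = - (1 - alpha) / 2 -> 0 < alpha -> alpha < 1 -> 0 < s ->
  0 < eg_mult_im alpha c s ^+ 2.
Proof.
move=> -> a0 a1 s0.
have -> : eg_mult_im alpha (- (1 - alpha) / 2) s = - (alpha * s * (2 - alpha))
  by rewrite /eg_mult_im; field.
by rewrite sqrrN exprn_gt0 // !mulr_gt0 // subr_gt0; lra.
Qed.

Theorem theorem3p3 (R : realType) (L alpha rho : R)
  (hL : 0 < L) (ha0 : 0 < alpha) (ha1 : alpha < 1)
  (hrho1 : - (1 / (2 * L)) < rho)
  (hrho2 : (1 - alpha) / 2 <= - (rho * L)) :
  forall n : nat, (2 <= n)%N ->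
  exists (F : 'rV[R]_n -> 'rV[R]_n) (zstar z0 : 'rV[R]_n),
    [/\ lipschitz L F,
        F zstar = 0,
        (forall z, rho * (enorm (F z)) ^+ 2 <= edot (F z) (z - zstar))
      & ~ converges (eg_seq F L alpha z0)].
Proof.
move=> n n2; pose i0 : 'I_n := Ordinal (ltnW n2); pose i1 : 'I_n := Ordinal n2.
have i01 : i0 != i1 by [].
pose c : R := - (1 - alpha) / 2.
have c2 : 0 < 1 - c ^+ 2 by rewrite /c; nra.
pose s : R := Num.sqrt (1 - c ^+ 2).
have s0 : 0 < s by rewrite sqrtr_gt0.
have s2 : s ^+ 2 = 1 - c ^+ 2 by rewrite sqr_sqrtr // ltW.
have unit_cs : c ^+ 2 + s ^+ 2 = 1 by rewrite s2; ring.
pose z0 : 'rV[R]_n := \row_j (if j == i0 then 1 else 0).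
exists (plane_rot i0 i1 L c s), 0, z0; split.
- exact: plane_rot_lipschitz (ltW hL).
- exact: plane_rot0.
- by move=> z; rewrite subr0; apply: plane_rot_comonotone => //; rewrite /c; lra.
- have g_unit := eg_multiplier_unit (erefl c) unit_cs.
  have g_ne1 := eg_multiplier_im_ne0 (erefl c) ha0 ha1 s0.
  have orbit := eg_seq_plane_rot i01 c s alpha z0 (lt0r_neq0 hL).
  have radius0 : z0 0 i0 ^+ 2 + z0 0 i1 ^+ 2 = 1.
    by rewrite !mxE eqxx (negbTE (i01 : i1 != i0)) expr1n expr0n addr0.
  apply: (not_converges_const_steps i01 _ (rotation_orbit_steps g_unit orbit)).
  by rewrite radius0 mulr1 ltr_wpDl ?sqr_ge0.
Qed.
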